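(* Let $K$ be a field of characteristic $\neq 2$ and $A\in K\setminus\{0\}$ a non-zero constant. Then $x^2+y^2+z^2=Axyz$ has a fundamental Markoff triple if and only if $K$ contains a square root $i$ of $-1$. Moreover, if $i\in K$, every fundamental Markoff triple has one of the forms $$(0,\varepsilon if,f)\qquad\text{or}\qquad\left(\tfrac{2a}{A},\,af+\varepsilon\tfrac{2ai}{A},\,f\right)$$ for some $f\in K[t]\setminus K$, $a\in\{\pm1\}$ and $\varepsilon\in\{\pm1\}$.
   Context: Solutions are triples $(x,y,z)\in K[t]^3$ with $x^2+y^2+z^2=Axyz$. The degree of the zero polynomial is $-\infty$. The height is $\max\{\deg x,\deg y,\deg z\}$. A Markoff triple is a solution with positive height and $\deg x\le\deg y\le\deg z$; it is fundamental if moreover $\deg y=\deg z$. *)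

From HB Require Import structures.
From mathcomp Require Import all_boot all_order all_algebra.
Set Implicit Arguments. Unset Strict Implicit. Unset Printing Implicit Defensive.
Import Order.TTheory GRing.Theory Num.Theory.
Local Open Scope ring_scope.

(* Degrees are encoded via [size] (size p = deg p + 1, size 0 = 0 encodes
   deg 0 = -oo); comparisons of degrees are comparisons of sizes. *)

Definition markoff_solution (K : fieldType) (A : K) (x y z : {poly K}) : Prop :=
  x ^+ 2 + y ^+ 2 + z ^+ 2 = A%:P * x * y * z.

Definition markoff_height_pos (K : fieldType) (x y z : {poly K}) : Prop :=
  (1 < maxn (size x) (maxn (size y) (size z)))%N.

Definition markoff_triple (K : fieldType) (A : K) (x y z : {poly K}) : Prop :=
  [/\ markoff_solution A x y z, markoff_height_pos x y z,
      (size x <= size y)%N & (size y <= size z)%N].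

Definition fundamental_markoff_triple (K : fieldType) (A : K) (x y z : {poly K}) : Prop :=
  markoff_triple A x y z /\ size y = size z.

(* Comparing degrees in x^2 + y^2 + z^2 = A x y z with deg y = deg z > 0
   forces x to be a constant c.  If c = 0 then y^2 = -z^2, so the ratio of
   leading coefficients is a square root of -1.  If c != 0, the equation reads
   y^2 - A c y z + z^2 = -c^2; the ratio r of leading coefficients is a root of
   T^2 - A c T + 1, so the form factors as (y - r z)(y - r^-1 z) = -c^2.  Both
   factors are then constants, which forces r = r^-1 = a in {1, -1}, A c = 2a
   and y = a z + al with al^2 = -c^2; hence al / c is a square root of -1. *)

From HB Require Import structures.
From mathcomp Require Import all_boot all_order all_algebra.
From mathcomp Require Import ring zify.
Set Implicit Arguments.
Unset Strict Implicit.
Unset Printing Implicit Defensive.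
Import GRing.Theory.
Local Open Scope ring_scope.

Lemma sqr_eq_oppr_sqr (R : idomainType) (i b d : R) :
  i ^+ 2 = -1 -> b ^+ 2 = - d ^+ 2 -> b = i * d \/ b = - (i * d).
Proof.
move=> i2 bd.
have : (b - i * d) * (b + i * d) = 0.
  by rewrite -subr_sqr exprMn i2 bd; ring.
move/eqP; rewrite mulf_eq0 subr_eq0 addr_eq0 => /orP[] /eqP; by [left | right].
Qed.

Lemma sqr_div_eqN1 (F : fieldType) (b d : F) :
  d != 0 -> b ^+ 2 = - d ^+ 2 -> (b / d) ^+ 2 = -1.
Proof. by move=> d0 bd; rewrite expr_div_n bd; field. Qed.

Lemma coef_mul_lead (R : idomainType) (p q : {poly R}) :
  p != 0 -> q != 0 -> (p * q)`_(size p + size q).-2 = lead_coef p * lead_coef q.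
Proof. by move=> p0 q0; rewrite -lead_coefM lead_coefE size_mul. Qed.

Section PolyOverField.

Variable K : fieldType.
Implicit Types (p q y z : {poly K}) (u k : K).

Lemma size_sqr_leq p n :
  (0 < n)%N -> (size p <= n)%N -> (size (p ^+ 2) <= n.*2.-1)%N.
Proof. by move=> n0 spn; apply: leq_trans (size_poly_exp_leq p 2) _; lia. Qed.

Lemma quadratic_form_lead_coef y z u k :
  (1 < size z)%N -> size y = size z ->
  y ^+ 2 - u%:P * y * z + z ^+ 2 = k%:P ->
  lead_coef y ^+ 2 - u * (lead_coef y * lead_coef z) + lead_coef z ^+ 2 = 0.
Proof.
move=> sz syz E.
have [y0 z0] : y != 0 /\ z != 0 by rewrite -!size_poly_gt0 syz ltnW.
have := congr1 (fun p => p`_(size z + size z).-2) E.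
rewrite !expr2 -mulrA !coefD coefN coefCM coefC coef_mul_lead // -{1 2 3}syz.
by rewrite !coef_mul_lead // ifN_eq //; lia.
Qed.

Lemma quadratic_form_eqC y z u k :
  (1 < size z)%N -> size y = size z -> k != 0 ->
  y ^+ 2 - u%:P * y * z + z ^+ 2 = k%:P ->
  exists a al, [/\ a ^+ 2 = 1, u = 2%:R * a, y = a%:P * z + al%:P & al ^+ 2 = k].
Proof.
move=> sz syz k0 E.
have [y0 z0] : y != 0 /\ z != 0 by rewrite -!size_poly_gt0 syz ltnW.
have lcy0 : lead_coef y != 0 by rewrite lead_coef_eq0.
have lcz0 : lead_coef z != 0 by rewrite lead_coef_eq0.
set r := lead_coef y / lead_coef z.
have r0 : r != 0 by rewrite mulf_neq0 ?invr_eq0.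
have r_root : r ^+ 2 - u * r + 1 = 0.
  have := quadratic_form_lead_coef sz syz E.
  by rewrite /r => lc; apply: (mulIf (mulf_neq0 lcz0 lcz0)); rewrite mul0r -lc; field.
have u_sum : u = r + r^-1.
  by apply: (mulIf r0); rewrite mulrDl mulVf // -[X in _ = X]subr0 -r_root; ring.
have factor : (y - r%:P * z) * (y - r^-1%:P * z) = k%:P.
  rewrite -E u_sum polyCD.
  transitivity (y ^+ 2 - (r%:P + r^-1%:P) * y * z + r%:P * r^-1%:P * z ^+ 2).
    by ring.
  by rewrite -polyCM mulfV // mul1r.
have /andP[/eqP s1 /eqP s2] :
    (size (y - r%:P * z) == 1) && (size (y - r^-1%:P * z) == 1).
  by rewrite -size_mul_eq1 factor size_polyC k0.
set al := (y - r%:P * z)`_0; set be := (y - r^-1%:P * z)`_0.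
have al_def : y - r%:P * z = al%:P by apply: size1_polyC; rewrite s1.
have be_def : y - r^-1%:P * z = be%:P by apply: size1_polyC; rewrite s2.
have r_inv : r^-1 = r.
  apply/eqP; rewrite -subr_eq0; apply: contraTT sz => nz; rewrite -leqNgt.
  have const_diff : (r^-1 - r)%:P * z = (al - be)%:P.
    by rewrite !polyCB -al_def -be_def; ring.
  by rewrite -(size_Cmul z nz) const_diff size_polyC_leq1.
exists r, al; split.
- by rewrite expr2 -[X in r * X]r_inv mulfV.
- by rewrite u_sum r_inv; ring.
- by rewrite -al_def; ring.
- apply: polyC_inj; rewrite polyC_exp -al_def -factor r_inv; ring.
Qed.

End PolyOverField.

Section FundamentalMarkoff.

Variables (K : fieldType) (A : K).
Hypothesis A0 : A != 0.

Lemma fundamental_markoff_size x y z : fundamental_markoff_triple A x y z ->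
  (1 < size z)%N /\ (size x <= 1)%N.
Proof.
move=> [[E hpos sxy syz] eyz]; rewrite /markoff_height_pos in hpos.
have sz : (1 < size z)%N by lia.
split=> //; have [->|x0] := eqVneq x 0; first by rewrite size_poly0.
have [y0 z0] : y != 0 /\ z != 0 by rewrite -!size_poly_eq0; lia.
have lhs_size : (size (x ^+ 2 + y ^+ 2 + z ^+ 2)%R <= (size z).*2.-1)%N.
  rewrite (leq_trans (size_polyD _ _)) // geq_max size_sqr_leq ?(ltnW sz) // andbT.
  rewrite (leq_trans (size_polyD _ _)) // geq_max !size_sqr_leq ?(ltnW sz) //.
  exact: leq_trans syz.
have rhs_size : size (A%:P * x * y * z) = (size x + size y + size z).-2.
  rewrite -!mulrA size_Cmul // !size_mul ?mulf_neq0 //.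
  (* [size_mul] reads sizes through the integral domain structure: [set] folds
     them back to the atoms of the goal so that [lia] identifies them. *)
  move: x0 y0; rewrite -!size_poly_gt0.
  by set n := size x; set m := size y; set l := size z; lia.
by move: lhs_size; rewrite E rhs_size; lia.
Qed.

Lemma fundamental_markoff_cases x y z : fundamental_markoff_triple A x y z ->
  (1 < size z)%N /\
  ((x = 0 /\ y ^+ 2 = - z ^+ 2) \/
   exists2 c, c != 0 & exists a al, [/\ x = c%:P, a ^+ 2 = 1, A * c = 2%:R * a,
                                        y = a%:P * z + al%:P & al ^+ 2 = - c ^+ 2]).
Proof.
move=> fund; have [sz sx] := fundamental_markoff_size fund.
move: fund => [[E _ _ _] syz]; split=> //.
have [x0|x0] := eqVneq x 0.
  left; split=> //; move: E; rewrite /markoff_solution x0 expr0n /= mulr0 !mul0r add0r.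
  by move/eqP; rewrite addr_eq0 => /eqP.
right; set c := x`_0.
have xc : x = c%:P by apply: size1_polyC.
have c0 : c != 0 by rewrite -polyC_eq0 -xc.
have E' : y ^+ 2 - (A * c)%:P * y * z + z ^+ 2 = (- c ^+ 2)%:P.
  apply/eqP; rewrite polyCN polyC_exp polyCM -subr_eq0; apply/eqP.
  transitivity (x ^+ 2 + y ^+ 2 + z ^+ 2 - A%:P * x * y * z); first by rewrite xc; ring.
  by rewrite E subrr.
have c2 : - c ^+ 2 != 0 by rewrite oppr_eq0 expf_neq0.
have [a [al [a2 u2 ydef al2]]] := quadratic_form_eqC sz syz c2 E'.
by exists c => //; exists a, al.
Qed.

Lemma fundamental_markoff_sqrtN1 x y z :
  fundamental_markoff_triple A x y z -> exists i : K, i ^+ 2 = -1.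
Proof.
move=> /fundamental_markoff_cases[sz [[_ yz] | [c c0 [a [al [_ _ _ _ al2]]]]]].
- have z0 : lead_coef z != 0 by rewrite lead_coef_eq0 -size_poly_eq0; lia.
  exists (lead_coef y / lead_coef z); apply: sqr_div_eqN1 => //.
  by rewrite -!lead_coef_exp yz lead_coefN.
- by exists (al / c); apply: sqr_div_eqN1.
Qed.

Lemma fundamental_markoff_form i x y z :
  i ^+ 2 = -1 -> fundamental_markoff_triple A x y z ->
  exists (f : {poly K}) (a e : K),
    [/\ (1 < size f)%N, a = 1 \/ a = -1, e = 1 \/ e = -1 &
        (x = 0 /\ y = (e * i)%:P * f /\ z = f) \/
        (x = (2%:R * a / A)%:P /\ y = a%:P * f + (e * 2%:R * a * i / A)%:P /\ z = f)].
Proof.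
move=> i2 /fundamental_markoff_cases[sz [[x0 yz] | [c _ [a [al [xc a2 Ac ydef al2]]]]]].
  have iP2 : i%:P ^+ 2 = -1 by rewrite -polyC_exp i2 polyCN.
  have [yE|yE] := sqr_eq_oppr_sqr iP2 yz.
    by exists z, 1, 1; split; [| left | left | left; rewrite mul1r].
  by exists z, 1, (-1); split; [| left | right | left; rewrite mulN1r polyCN mulNr].
have a1 : a = 1 \/ a = -1.
  by move/eqP: a2; rewrite sqrf_eq1 => /orP[] /eqP; [left | right].
have cE : c = 2%:R * a / A by rewrite -Ac; field.
have [alE|alE] := sqr_eq_oppr_sqr i2 al2.
  exists z, a, 1; split; [| | left | right; split; [by rewrite xc cE | split]] => //.
  by rewrite ydef alE cE; congr (_ + _%:P); field.
exists z, a, (-1); split; [| | right | right; split; [by rewrite xc cE | split]] => //.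
by rewrite ydef alE cE; congr (_ + _%:P); field.
Qed.

End FundamentalMarkoff.

Lemma fundamental_markoff_iX (K : fieldType) (A i : K) :
  i ^+ 2 = -1 -> fundamental_markoff_triple A 0 (i%:P * 'X) 'X.
Proof.
move=> i2; have : i ^+ 2 != 0 by rewrite i2 oppr_eq0 oner_eq0.
rewrite expf_eq0 /= => i0.
have siX : size (i%:P * 'X) = 2%N by rewrite size_Cmul ?size_polyX.
split; first split.
- by rewrite /markoff_solution !mulr0 !mul0r expr0n add0r exprMn -polyC_exp i2; ring.
- by rewrite /markoff_height_pos siX size_polyX size_poly0.
- by rewrite size_poly0.
- by rewrite siX size_polyX.
- by rewrite siX size_polyX.
Qed.

Theorem lemma2p4 (K : fieldType) (A : K) (char2 : (2%:R : K) != 0) (A0 : A != 0) :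
  ((exists x y z : {poly K}, fundamental_markoff_triple A x y z) <->
   (exists i : K, i ^+ 2 = -1)) /\
  (forall i : K, i ^+ 2 = -1 ->
   forall x y z : {poly K}, fundamental_markoff_triple A x y z ->
   exists (f : {poly K}) (a e : K),
     [/\ (1 < size f)%N, a = 1 \/ a = -1, e = 1 \/ e = -1 &
         (x = 0 /\ y = (e * i)%:P * f /\ z = f) \/
         (x = (2%:R * a / A)%:P /\
          y = a%:P * f + (e * 2%:R * a * i / A)%:P /\ z = f)]).
Proof.
split; first split.
- by move=> [x [y [z /(fundamental_markoff_sqrtN1 A0)]]].
- by move=> [i i2]; exists 0, (i%:P * 'X), 'X; apply: fundamental_markoff_iX.
- by move=> i i2 x y z; apply: fundamental_markoff_form.
Qed.
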